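(* Let $(u_k)_{k\in\mathbb N}$, with associated $(\tau_k)$, be generated by the proximal-gradient algorithm and assume $\nabla F$ is Lipschitz continuous from $L^2(0,T)$ to $L^2(0,T)$. Let $\bar u\in U_{ad}$ be the weak-$\star$ limit of $(u_k)$ in $\mathrm{BV}(0,T)$. Then for every accumulation point $\bar\tau$ of $(\tau_k)$, $\bar u$ solves \[\min_{u\in U_{ad}}\ F(\bar u)+(\nabla F(\bar u),u-\bar u)_{L^2(0,T)}+\frac{\bar\tau}2\|u-\bar u\|_{L^2(0,T)}^2+\beta\mathrm{TV}(u).\]
   Context: $T>0$, $\beta>0$; $\nu_1<\dots<\nu_d$ are integers. $\mathrm{TV}(u):=\sup\{\int_0^T u\varphi'\,dt : \varphi\in C_c^1(0,T),\ \|\varphi\|_\infty\le 1\}$, $\mathrm{BV}(0,T)=\{u\in L^1(0,T):\mathrm{TV}(u)<\infty\}$. $U_{ad}:=\{u\in L^1(0,T): u(t)\in\{\nu_1,\dots,\nu_d\}\text{ a.e.}\}$. $F:L^1(0,T)\to\mathbb R$ is bounded from below and Gâteaux differentiable on $L^2(0,T)$ with gradient $\nabla F(u)\in L^2(0,T)$. $G(u):=\beta\mathrm{TV}(u)+\delta_{U_{ad}}(u)$ with $\delta_{U_{ad}}$ the indicator ($0$ on $U_{ad}$, $\infty$ elsewhere). Proximal-gradient algorithm: given $u_0\in U_{ad}\cap\mathrm{BV}(0,T)$ and $\eta>0$, for $k=0,1,\dots$ choose $\tau_k>0$ and a solution $u_{k+1}$ of $\min_{u\in L^2(0,T)} F(u_k)+(\nabla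 F(u_k),u-u_k)_{L^2}+\frac{\tau_k}2\|u-u_k\|_{L^2}^2+G(u)$ satisfying $\eta\|u_{k+1}-u_k\|_{L^2}^2\le F(u_k)+\beta\mathrm{TV}(u_k)-(F(u_{k+1})+\beta\mathrm{TV}(u_{k+1}))$. Under these assumptions such a sequence converges weakly-$\star$ in $\mathrm{BV}(0,T)$ to some $\bar u\in U_{ad}$. *)

From HB Require Import structures.
From mathcomp Require Import all_boot all_order all_algebra.
From mathcomp Require Import all_classical all_reals all_analysis.
Set Implicit Arguments. Unset Strict Implicit. Unset Printing Implicit Defensive.
Import Order.TTheory GRing.Theory Num.Theory.
Import numFieldNormedType.Exports.
Local Open Scope classical_set_scope.
Local Open Scope ring_scope.

Section Defs.
Variable R : realType.
Local Notation mu := (@lebesgue_measure R).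

Definition Dom (T : R) : set R := `]0, T[.

(* u ∈ L^1(0,T) (a representative) *)
Definition L1 (T : R) (u : R -> R) : Prop :=
  mu.-integrable (Dom T) (EFin \o u).

Definition L2 (T : R) (u : R -> R) : Prop :=
  measurable_fun (Dom T) u /\
  mu.-integrable (Dom T) (fun x => ((u x) ^+ 2)%:E).

Definition inner2 (T : R) (u v : R -> R) : R :=
  Rintegral mu (Dom T) (fun x => u x * v x).

Definition nrm2sq (T : R) (u : R -> R) : R :=
  Rintegral mu (Dom T) (fun x => (u x) ^+ 2).
Definition nrm2 (T : R) (u : R -> R) : R := Num.sqrt (nrm2sq T u).

Definition ae_eq_on (T : R) (u v : R -> R) : Prop :=
  {ae mu, forall x, Dom T x -> u x = v x}.

Definition Cc1 (T : R) (phi : R -> R) : Prop :=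
  (forall x, derivable phi x 1) /\ continuous (derive1 phi) /\
  exists a b : R, 0 < a /\ a <= b /\ b < T /\
    (forall x, x < a \/ b < x -> phi x = 0).

Definition TV (T : R) (u : R -> R) : \bar R :=
  ereal_sup [set r | exists phi : R -> R,
     [/\ Cc1 T phi, (forall x, `|phi x| <= 1) &
         r = (\int[mu]_(x in Dom T) (u x * derive1 phi x)%:E)%E]].

Definition BV (T : R) (u : R -> R) : Prop := L1 T u /\ (TV T u < +oo)%E.

Definition Uad (T : R) (d : nat) (nu : 'I_d -> int) (u : R -> R) : Prop :=
  L1 T u /\ {ae mu, forall t, Dom T t -> exists i : 'I_d, u t = (nu i)%:~R}.

Definition deltaUad (T : R) (d : nat) (nu : 'I_d -> int) (u : R -> R) : \bar R :=
  if `[< Uad T nu u >] then 0%E else +oo%E.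

Definition Gfun (T beta : R) (d : nat) (nu : 'I_d -> int) (u : R -> R) : \bar R :=
  (beta%:E * TV T u + deltaUad T nu u)%E.

Definition lin_quad (T : R) (F : (R -> R) -> R) (gradF : (R -> R) -> R -> R)
  (w : R -> R) (tau : R) (u : R -> R) : R :=
  F w + inner2 T (gradF w) (fun x => u x - w x)
      + tau / 2 * nrm2sq T (fun x => u x - w x).

(* weak-* convergence in BV(0,T): convergence in L^1 and boundedness in BV
   (Ambrosio–Fusco–Pallara, Prop. 3.13) *)
Definition weak_star_BV (T : R) (u : nat -> R -> R) (ub : R -> R) : Prop :=
  (forall k, BV T (u k)) /\ BV T ub /\
  (fun k => Rintegral mu (Dom T) (fun x => `|u k x - ub x|)) @ \oo --> (0 : R) /\
  exists M : R, forall k, (TV T (u k) <= M%:E)%E.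

Definition acc_point (tau : nat -> R) (tb : R) : Prop :=
  forall e : R, 0 < e -> forall N : nat, exists k : nat, (N <= k)%N /\ `|tau k - tb| < e.

End Defs.

From HB Require Import structures.
From mathcomp Require Import all_boot all_order all_algebra.
From mathcomp Require Import all_classical all_reals all_analysis.
From mathcomp Require Import measurable_realfun ring lra.
Import Order.TTheory GRing.Theory Num.Theory.
Import numFieldNormedType.Exports.
Local Open Scope classical_set_scope.
Local Open Scope ring_scope.

(* Every iterate lies in U_ad: otherwise G(u_{k+1}) = +oo, contradicting the
   optimality of u_{k+1} against the competitor u_0, whose G-value is finite.
   Functions of U_ad are bounded by sum_i |nu_i|, so the L^1 convergence
   u_k -> ubar contained in weak-* convergence upgrades to L^2 convergence, and
   the Lipschitz bound gives gradF(u_k) -> gradF(ubar) in L^2.  For a test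
   function phi, bounding TV(u_{k+1}) from below by the pairing of u_{k+1} with
   phi' in the optimality of u_{k+1} against v in U_ad yields an inequality all
   of whose terms, once F(u_k) is cancelled from both sides, are continuous for
   L^2 convergence.  Passing to the limit along a subsequence with
   tau_k -> taubar and taking the supremum over phi gives the claim. *)

Lemma sqr_le_discriminant (R : realFieldType) (a b c : R) : 0 <= a ->
  (forall s, 0 <= s ^+ 2 * a + 2 * s * b + c) -> b ^+ 2 <= a * c.
Proof.
move=> a0 quad_ge0; have [a_eq0|a_neq0] := eqVneq a 0.
  have [->|b_neq0] := eqVneq b 0; first by rewrite expr0n a_eq0 mul0r.
  have := quad_ge0 (- (c + 1) / (2 * b)).
  suff -> : (- (c + 1) / (2 * b)) ^+ 2 * a + 2 * (- (c + 1) / (2 * b)) * b + c = -1.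
    by rewrite ler0N1.
  by rewrite a_eq0; field.
have a_gt0 : 0 < a by rewrite lt_neqAle eq_sym a_neq0.
have := quad_ge0 (- b / a).
have -> : (- b / a) ^+ 2 * a + 2 * (- b / a) * b + c = c - b ^+ 2 / a by field.
by rewrite subr_ge0 ler_pdivrMr // mulrC.
Qed.

Lemma cvg_dist_le (R : realType) (x b : nat -> R) (l : R) :
  (forall k, `|x k - l| <= b k) -> b @ \oo --> 0 -> x @ \oo --> l.
Proof.
move=> xb b0; apply/subr_cvg0/norm_cvg0P.
apply: (@squeeze_cvgr _ _ _ _ (cst 0) b) => //; last exact: cvg_cst.
by near=> k; rewrite normr_ge0 xb.
Unshelve. all: by end_near.
Qed.

Lemma cvg_subseq {R : realType} {x : nat -> R} {l : R} {sigma : nat -> nat} :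
  increasing_seq sigma -> x @ \oo --> l -> x \o sigma @ \oo --> l.
Proof.
move=> incr xl; apply: cvg_comp xl.
have le_sigma n : (n <= sigma n)%N.
  elim: n => // n IHn; apply: leq_ltn_trans IHn _.
  by move/increasing_seqP : incr; exact.
apply/cvgnyPgey; near=> N; near=> n; apply: leq_trans (le_sigma n).
by near: n; exact: nbhs_infty_ge.
Unshelve. all: by end_near.
Qed.

Lemma acc_point_subseq {R : realType} {tau : nat -> R} {tb : R} :
  acc_point tau tb -> exists2 sigma, increasing_seq sigma & tau \o sigma @ \oo --> tb.
Proof.
move=> acc; apply/cluster_eventually_cvg/cluster_eventuallyP => e N e0.
have [k [Nk close]] := acc e e0 N.
by exists k => //; rewrite distrC ltW.
Qed.

Section L2_space.
Context {R : realType} {T : R}.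
Local Notation mu := (@lebesgue_measure R).
Local Notation mu_int f := (mu.-integrable (Dom T) (EFin \o f)).
Implicit Types (f g h : R -> R) (s : R).

Lemma measurable_Dom : measurable (Dom T : set (measurableTypeR R)).
Proof. exact: measurable_itv. Qed.
Local Hint Resolve measurable_Dom : core.

Lemma integrable_scale_add s {f g} : mu_int f -> mu_int g ->
  mu_int (fun x => s * f x + g x).
Proof.
move=> hf hg; have := integrableD measurable_Dom (integrableZl measurable_Dom s hf) hg.
by apply: (eq_integrable measurable_Dom) => x _.
Qed.

Lemma L2_integrableM {f g} : L2 T f -> L2 T g -> mu_int (fun x => f x * g x).
Proof.
move=> [mf if2] [mg ig2].
have i12 := integrable_scale_add 1 if2 ig2.
apply: (le_integrable measurable_Dom _ _ i12).
  by apply/measurable_EFinP; exact: measurable_funM.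
move=> x _ /=; rewrite lee_fin mul1r [`|_ + _|]ger0_norm ?addr_ge0 ?sqr_ge0 // normrM.
rewrite -[f x ^+ 2]real_normK ?num_real // -[g x ^+ 2]real_normK ?num_real //.
by have := normr_ge0 (f x); have := normr_ge0 (g x); nra.
Qed.

Lemma L2_scale_add s {f g} : L2 T f -> L2 T g -> L2 T (fun x => s * f x + g x).
Proof.
move=> hf hg; split.
  by apply: measurable_funD; [apply: measurable_funM; case: hf|case: hg].
have := integrable_scale_add (s ^+ 2) hf.2
  (integrable_scale_add (2 * s) (L2_integrableM hf hg) hg.2).
by apply: (eq_integrable measurable_Dom) => x _ /=; congr EFin; ring.
Qed.

Lemma L2B {f g} : L2 T f -> L2 T g -> L2 T (fun x => f x - g x).
Proof.
move=> hf hg; have := L2_scale_add (-1) hg hf.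
by congr L2; apply/funext => x; ring.
Qed.

Lemma nrm2sq_ge0 f : 0 <= nrm2sq T f.
Proof. by apply: Rintegral_ge0 => x _; exact: sqr_ge0. Qed.

Lemma nrm2sq_inner2 f : nrm2sq T f = inner2 T f f.
Proof. by apply: eq_Rintegral => x _; rewrite expr2. Qed.

Lemma nrm2sq_scale_add s {f g} : L2 T f -> L2 T g ->
  nrm2sq T (fun x => s * f x + g x) =
  s ^+ 2 * nrm2sq T f + 2 * s * inner2 T f g + nrm2sq T g.
Proof.
move=> hf hg; have ifg := L2_integrableM hf hg.
have iZ c h : mu_int h -> mu_int (fun x => c * h x).
  move=> ih; have := integrableZl measurable_Dom c ih.
  by apply: (eq_integrable measurable_Dom) => x _.
transitivity (Rintegral mu (Dom T)
  (fun x => s ^+ 2 * f x ^+ 2 + ((2 * s) * (f x * g x) + g x ^+ 2))).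
  by apply: eq_Rintegral => x _; ring.
rewrite !RintegralD ?iZ ?hf.2 ?hg.2 //.
  by rewrite !RintegralZl ?hf.2 // addrA.
exact: integrable_scale_add _ ifg hg.2.
Qed.

Lemma inner2_sqr_le {f g} : L2 T f -> L2 T g ->
  inner2 T f g ^+ 2 <= nrm2sq T f * nrm2sq T g.
Proof.
move=> hf hg; apply: sqr_le_discriminant; first exact: nrm2sq_ge0.
by move=> s; rewrite -nrm2sq_scale_add //; exact: nrm2sq_ge0.
Qed.

Lemma normr_inner2_le {f g} : L2 T f -> L2 T g ->
  `|inner2 T f g| <= nrm2 T f * nrm2 T g.
Proof.
move=> hf hg; rewrite -sqrtr_sqr -sqrtrM ?nrm2sq_ge0 // ler_sqrt.
  exact: inner2_sqr_le.
by rewrite mulr_ge0 ?nrm2sq_ge0.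
Qed.

Lemma nrm2_scale_add_le s {f g} : L2 T f -> L2 T g ->
  nrm2 T (fun x => s * f x + g x) <= `|s| * nrm2 T f + nrm2 T g.
Proof.
move=> hf hg; have nf := sqrtr_ge0 (nrm2sq T f); have ng := sqrtr_ge0 (nrm2sq T g).
rewrite -[leRHS]ger0_norm ?addr_ge0 ?mulr_ge0 // -sqrtr_sqr ler_sqrt ?sqr_ge0 //.
rewrite nrm2sq_scale_add // -[nrm2sq T f]sqr_sqrtr ?nrm2sq_ge0 //.
rewrite -[nrm2sq T g]sqr_sqrtr ?nrm2sq_ge0 // -/(nrm2 T f) -/(nrm2 T g).
have : s * inner2 T f g <= `|s| * (nrm2 T f * nrm2 T g).
  by rewrite (le_trans (ler_norm _)) // normrM ler_wpM2l // normr_inner2_le.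
rewrite -[s ^+ 2]real_normK ?num_real //; nra.
Qed.

Lemma inner2_subr {f f' g g'} : L2 T f -> L2 T f' -> L2 T g -> L2 T g' ->
  inner2 T f g - inner2 T f' g' =
  inner2 T (fun x => f x - f' x) g + inner2 T f' (fun x => g x - g' x).
Proof.
move=> hf hf' hg hg'.
rewrite /inner2 -RintegralB ?L2_integrableM // -RintegralD ?L2_integrableM //;
  try exact: L2B.
by apply: eq_Rintegral => x _; ring.
Qed.


Lemma measure_Dom_lty : (mu (Dom T) < +oo)%E.
Proof. by rewrite /Dom lebesgue_measure_itv /=; case: ifP => _ //; exact: ltry. Qed.

Lemma L1_measurable {f} : L1 T f -> measurable_fun (Dom T) f.
Proof. by case/integrableP => /measurable_EFinP. Qed.

Lemma L1B {f g} : L1 T f -> L1 T g -> L1 T (fun x => f x - g x).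
Proof.
move=> hf hg; have := integrable_scale_add (-1) hg hf.
by apply: (eq_integrable measurable_Dom) => x _ /=; congr EFin; ring.
Qed.

Lemma nrm2sq_le_L1 (K : R) f : 0 <= K -> L1 T f ->
  {ae mu, forall x, Dom T x -> `|f x| <= K} ->
  nrm2sq T f <= K * Rintegral mu (Dom T) (fun x => `|f x|).
Proof.
move=> K0 if1 f_le; have mf := L1_measurable if1.
have iKf : mu_int (fun x => K * `|f x|).
  have := integrableZl measurable_Dom K (integrable_abse if1).
  by apply: (eq_integrable measurable_Dom) => x _.
rewrite -RintegralZl //; last first.
  by have := integrable_abse if1; apply: (eq_integrable measurable_Dom) => x _.
have sq_le_Kabs : (\int[mu]_(x in Dom T) (f x ^+ 2)%:E <=
                \int[mu]_(x in Dom T) (K * `|f x|)%:E)%E.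
  apply: ae_ge0_le_integral => //.
  - by move=> x _; rewrite lee_fin sqr_ge0.
  - by apply/measurable_EFinP; exact: measurable_funX.
  - by move=> x _; rewrite lee_fin mulr_ge0.
  - by apply/measurable_EFinP; apply: measurable_funM => //; exact: measurableT_comp.
  apply: (@filterS _ _ (ae_filter_ringOfSetsType mu) _ _ _ f_le) => x fxK Dx.
  by rewrite lee_fin -real_normK ?num_real // expr2 ler_wpM2r // fxK.
have fin_Kf := integrable_fin_num measurable_Dom iKf.
apply: fine_le => //.
rewrite ge0_fin_numE; last by apply: integral_ge0 => x _; rewrite lee_fin sqr_ge0.
apply: le_lt_trans sq_le_Kabs _.
by move/fin_numPlt: fin_Kf => /andP[_ ->].
Qed.

Lemma L2_bounded {K : R} {f} : L1 T f ->
  {ae mu, forall x, Dom T x -> `|f x| <= K} -> L2 T f.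
Proof.
move=> /L1_measurable mf f_le; split => //; apply/integrableP; split.
  by apply/measurable_EFinP; exact: measurable_funX.
apply: (@le_lt_trans _ _ (\int[mu]_(x in Dom T) (K ^+ 2)%:E)%E).
  apply: ae_ge0_le_integral => //.
  - by apply: measurableT_comp => //; apply/measurable_EFinP; exact: measurable_funX.
  - by move=> x _; rewrite lee_fin sqr_ge0.
  apply: (@filterS _ _ (ae_filter_ringOfSetsType mu) _ _ _ f_le) => x fxK Dx.
  rewrite abse_EFin lee_fin ger0_norm ?sqr_ge0 // -real_normK ?num_real //.
  by rewrite lerXn2r ?nnegrE // (le_trans _ (fxK Dx)).
by rewrite integral_cst // lte_mul_pinfty ?lee_fin ?sqr_ge0 ?measure_Dom_lty.
Qed.

Lemma L2_continuous {f} : continuous f -> L2 T f.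
Proof.
move=> cf; split; first exact: measurable_funS (continuous_measurable_fun cf).
have : mu.-integrable `[0, T] (EFin \o (fun x => f x * f x)).
  apply: continuous_compact_integrable; first exact: segment_compact.
  by apply: continuous_subspaceT => x; exact: continuousM (cf x) (cf x).
have Dom_sub : Dom T `<=` `[0, T] by apply: subset_itvW.
move=> if2; have := integrableS _ measurable_Dom _ if2 => /(_ (measurable_itv _) Dom_sub).
by apply: (eq_integrable measurable_Dom) => x _ /=; rewrite expr2.
Qed.

Definition L2_cvg (f_ : nat -> R -> R) (f : R -> R) : Prop :=
  [/\ forall k, L2 T (f_ k), L2 T f &
      (fun k => nrm2 T (fun x => f_ k x - f x)) @ \oo --> 0].

Lemma L2_cvg_cst {f} : L2 T f -> L2_cvg (fun=> f) f.
Proof.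
move=> hf; split => //; apply: cvg_near_cst; near=> k.
rewrite /nrm2 /nrm2sq (@eq_Rintegral _ _ _ _ _ (cst 0)) ?Rintegral_cst ?mul0r ?sqrtr0 //.
by move=> x _; rewrite subrr expr0n.
Unshelve. all: by end_near.
Qed.

Lemma L2_cvgB {f_ g_ : nat -> R -> R} {f g} : L2_cvg f_ f -> L2_cvg g_ g ->
  L2_cvg (fun k x => f_ k x - g_ k x) (fun x => f x - g x).
Proof.
move=> [hf_ hf f_cvg] [hg_ hg g_cvg]; split => [k||]; try exact: L2B.
apply: (@cvg_dist_le _ _ (fun k => nrm2 T (fun x => g_ k x - g x) +
                                    nrm2 T (fun x => f_ k x - f x))).
  move=> k; rewrite subr0 ger0_norm ?sqrtr_ge0 //.
  have := nrm2_scale_add_le (-1) (L2B (hg_ k) hg) (L2B (hf_ k) hf).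
  congr (_ <= _); last by rewrite normrN1 mul1r.
  by congr nrm2; apply/funext => x; ring.
by rewrite -[0]addr0; exact: cvgD.
Qed.

Lemma L2_cvg_subseq {f_ : nat -> R -> R} {f sigma} : increasing_seq sigma ->
  L2_cvg f_ f -> L2_cvg (fun k => f_ (sigma k)) f.
Proof. by move=> incr [hf_ hf f_cvg]; split => //; exact: cvg_subseq incr f_cvg. Qed.

Lemma inner2_cvg {f_ g_ : nat -> R -> R} {f g} : L2_cvg f_ f -> L2_cvg g_ g ->
  (fun k => inner2 T (f_ k) (g_ k)) @ \oo --> inner2 T f g.
Proof.
move=> [hf_ hf f_cvg] [hg_ hg g_cvg].
pose df k := nrm2 T (fun x => f_ k x - f x).
pose dg k := nrm2 T (fun x => g_ k x - g x).
apply: (@cvg_dist_le _ _ (fun k => df k * (dg k + nrm2 T g) + nrm2 T f * dg k)).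
  move=> k; rewrite inner2_subr //; apply: le_trans (ler_normD _ _) _.
  apply: lerD; last exact: normr_inner2_le (L2B (hg_ k) hg).
  apply: le_trans (normr_inner2_le (L2B (hf_ k) hf) (hg_ k)) _.
  apply: ler_wpM2l; first exact: sqrtr_ge0.
  have := nrm2_scale_add_le 1 (L2B (hg_ k) hg) hg; rewrite normr1 mul1r.
  by congr (_ <= _); congr nrm2; apply/funext => x; ring.
have -> : 0 = 0 * (0 + nrm2 T g) + nrm2 T f * 0 :> R by rewrite mul0r mulr0 addr0.
by apply: cvgD; apply: cvgM => //; [exact: cvgD g_cvg (cvg_cst _) | exact: cvg_cst].
Qed.

Lemma nrm2sq_cvg {f_ : nat -> R -> R} {f} : L2_cvg f_ f ->
  (fun k => nrm2sq T (f_ k)) @ \oo --> nrm2sq T f.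
Proof.
by move=> f_cvg; rewrite nrm2sq_inner2; under eq_fun do rewrite nrm2sq_inner2; exact: inner2_cvg.
Qed.

Lemma L2_cvg_lipschitz {G : (R -> R) -> R -> R} {L : R} {f_ : nat -> R -> R} {f} :
  (forall g, L2 T g -> L2 T (G g)) ->
  (forall g h, L2 T g -> L2 T h ->
     nrm2 T (fun x => G g x - G h x) <= L * nrm2 T (fun x => g x - h x)) ->
  L2_cvg f_ f -> L2_cvg (fun k => G (f_ k)) (G f).
Proof.
move=> L2G lipG [hf_ hf f_cvg]; split => [k||]; try exact: L2G.
apply: (@cvg_dist_le _ _ (fun k => L * nrm2 T (fun x => f_ k x - f x))).
  by move=> k; rewrite subr0 ger0_norm ?sqrtr_ge0 // lipG.
by rewrite -(mulr0 L); apply: cvgM f_cvg; exact: cvg_cst.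
Qed.

Lemma lin_quad_cvg {F : (R -> R) -> R} {gradF : (R -> R) -> R -> R}
    {w_ u_ : nat -> R -> R} {tau_ : nat -> R} {w u tau} :
  L2_cvg w_ w -> L2_cvg (fun k => gradF (w_ k)) (gradF w) -> L2_cvg u_ u ->
  tau_ @ \oo --> tau ->
  (fun k => lin_quad T F gradF (w_ k) (tau_ k) (u_ k) - F (w_ k)) @ \oo -->
  lin_quad T F gradF w tau u - F w.
Proof.
(* F is not assumed continuous for L^2 convergence, hence the subtraction of F (w_ k). *)
move=> cvw cvgrad cvu cvtau; have cvuw := L2_cvgB cvu cvw.
have lin_quadE w' t u' : lin_quad T F gradF w' t u' - F w' =
    inner2 T (gradF w') (fun x => u' x - w' x) + t / 2 * nrm2sq T (fun x => u' x - w' x).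
  by rewrite /lin_quad; ring.
rewrite lin_quadE; under eq_fun do rewrite lin_quadE.
apply: cvgD; first exact: inner2_cvg cvgrad cvuw.
by apply: cvgM; [apply: cvgM cvtau (cvg_cst _) | exact: nrm2sq_cvg].
Qed.

Lemma lin_quad_test_ineq_cvg {F : (R -> R) -> R} {gradF : (R -> R) -> R -> R}
    {w_ w1_ : nat -> R -> R} {tau_ : nat -> R} {w tau v psi} {beta V : R} :
  L2_cvg w_ w -> L2_cvg w1_ w -> L2_cvg (fun k => gradF (w_ k)) (gradF w) ->
  tau_ @ \oo --> tau -> L2 T v -> L2 T psi ->
  (forall k, lin_quad T F gradF (w_ k) (tau_ k) (w1_ k) + beta * inner2 T (w1_ k) psi
             <= lin_quad T F gradF (w_ k) (tau_ k) v + beta * V) ->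
  lin_quad T F gradF w tau w + beta * inner2 T w psi
  <= lin_quad T F gradF w tau v + beta * V.
Proof.
move=> w_cvg w1_cvg grad_cvg tau_cvg hv hpsi ineq.
rewrite -(lerD2r (- F w)) addrAC [leRHS]addrAC.
have := ler_cvg_to (cvgD (lin_quad_cvg w_cvg grad_cvg w1_cvg tau_cvg)
                        (cvgM (cvg_cst beta) (inner2_cvg w1_cvg (L2_cvg_cst hpsi))))
                  (cvgD (lin_quad_cvg w_cvg grad_cvg (L2_cvg_cst hv) tau_cvg)
                        (cvg_cst (beta * V))).
apply; near=> k; have := ineq k; rewrite !fctE /=; lra.
Unshelve. all: by end_near.
Qed.

End L2_space.

Section total_variation.
Context {R : realType} {T : R}.
Local Notation mu := (@lebesgue_measure R).
Implicit Types (u phi : R -> R).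

Lemma TV_ge0 u : 0 < T -> (0 <= TV T u)%E.
Proof.
move=> T0; apply: ereal_sup_ubound; exists (cst 0); split.
- split; first by move=> x; exact: derivable_cst.
  split; last by exists (T / 2), (T / 2); do !split => //; lra.
  have -> : derive1 (cst (0 : R)) = cst 0 by apply/funext => x; exact: derive1_cst.
  exact: cst_continuous.
- by move=> x; rewrite normr0.
- by under eq_integral do rewrite derive1_cst mulr0; rewrite integral0.
Qed.

Lemma inner2_derive_le_TV u phi : L2 T u -> Cc1 T phi ->
  (forall x, `|phi x| <= 1) -> ((inner2 T u (derive1 phi))%:E <= TV T u)%E.
Proof.
move=> hu hphi phi_le1; apply: ereal_sup_ubound; exists phi; split => //.
have := L2_integrableM hu (L2_continuous hphi.2.1).
by move/(integrable_fin_num measurable_Dom)/fineK.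
Qed.

Lemma TV_le {u} {c : R} : L2 T u ->
  (forall phi, Cc1 T phi -> (forall x, `|phi x| <= 1) -> inner2 T u (derive1 phi) <= c) ->
  (TV T u <= c%:E)%E.
Proof.
move=> hu le_c; apply: ge_ereal_sup => _ [phi [hphi phi_le1 ->]].
have := L2_integrableM hu (L2_continuous hphi.2.1).
move/(integrable_fin_num measurable_Dom)/fineK <-.
by rewrite lee_fin; exact: le_c.
Qed.

End total_variation.

Section admissible_set.
Context {R : realType} {T : R} {d : nat} {nu : 'I_d -> int}.
Local Notation mu := (@lebesgue_measure R).

Definition Uad_bound : R := \sum_(i < d) `|(nu i)%:~R : R|.

Lemma Uad_ae_bounded {u} : Uad T nu u ->
  {ae mu, forall x, Dom T x -> `|u x| <= Uad_bound}.
Proof.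
case=> _ u_nu; apply: (@filterS _ _ (ae_filter_ringOfSetsType mu) _ _ _ u_nu).
move=> x xnu Dx; have [i ->] := xnu Dx.
by rewrite /Uad_bound (bigD1 i) //= lerDl sumr_ge0.
Qed.

Lemma Uad_L2 {u} : Uad T nu u -> L2 T u.
Proof. by move=> hu; exact: L2_bounded hu.1 (Uad_ae_bounded hu). Qed.

Lemma Uad_L2_cvg {u_ : nat -> R -> R} {u} :
  (forall k, Uad T nu (u_ k)) -> Uad T nu u ->
  (fun k => Rintegral mu (Dom T) (fun x => `|u_ k x - u x|)) @ \oo --> 0 ->
  L2_cvg (T := T) u_ u.
Proof.
move=> hu_ hu L1_cvg; split => [k||]; try exact: Uad_L2.
have K0 : 0 <= 2 * Uad_bound by rewrite mulr_ge0 ?sumr_ge0.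
apply: (@cvg_dist_le _ _ (fun k => Num.sqrt (2 * Uad_bound *
    Rintegral mu (Dom T) (fun x => `|u_ k x - u x|)))).
  move=> k; rewrite subr0 ger0_norm ?sqrtr_ge0 // ler_sqrt; last first.
    by rewrite mulr_ge0 // Rintegral_ge0.
  apply: nrm2sq_le_L1 => //; first exact: L1B (hu_ k).1 hu.1.
  apply: (@filterS2 _ _ (ae_filter_ringOfSetsType mu) _ _ _ _
    (Uad_ae_bounded (hu_ k)) (Uad_ae_bounded hu)) => x uk_le u_le Dx.
  by rewrite (le_trans (ler_normB _ _)) // mulr2n mulrDl mul1r lerD ?uk_le ?u_le.
rewrite -sqrtr0 -(mulr0 (2 * Uad_bound)).
apply: (@continuous_cvg _ _ _ _ _ _ Num.sqrt); first exact: sqrt_continuous.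
by apply: cvgM L1_cvg; exact: cvg_cst.
Qed.

Lemma Gfun_notin_Uad (beta : R) v : 0 < T -> 0 <= beta -> ~ Uad T nu v ->
  Gfun T beta nu v = +oo%E.
Proof.
move=> T0 beta0 notUv; rewrite /Gfun /deltaUad (asboolF notUv) addey //.
by rewrite gt_eqF // (lt_le_trans ltNy0) // mule_ge0 ?lee_fin ?TV_ge0.
Qed.

Lemma Uad_of_prox_step {beta a b : R} {w v} : 0 < T -> 0 <= beta ->
  Uad T nu v -> (TV T v < +oo)%E ->
  (a%:E + Gfun T beta nu w <= b%:E + Gfun T beta nu v)%E -> Uad T nu w.
Proof.
move=> T0 beta0 Uv TVv_lty; apply: contraPP => notUw.
rewrite Gfun_notin_Uad // addey // leye_eq /Gfun /deltaUad asboolT // adde0.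
by apply/negP; rewrite -ltey lte_add_pinfty ?ltry // lte_mul_pinfty ?lee_fin.
Qed.

Lemma prox_step_test_le {beta a b V : R} {w v phi} : 0 <= beta ->
  Uad T nu w -> Uad T nu v -> TV T v = V%:E -> Cc1 T phi -> (forall x, `|phi x| <= 1) ->
  (a%:E + Gfun T beta nu w <= b%:E + Gfun T beta nu v)%E ->
  a + beta * inner2 T w (derive1 phi) <= b + beta * V.
Proof.
move=> beta0 Uw Uv TVv hphi phi_le1.
rewrite /Gfun /deltaUad (asboolT Uw) (asboolT Uv) TVv !adde0 => ineq.
rewrite -lee_fin !EFinD !EFinM; apply: le_trans ineq; apply: leeD2l.
by apply: lee_wpmul2l; [rewrite lee_fin | exact: inner2_derive_le_TV (Uad_L2 Uw) hphi _].
Qed.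

End admissible_set.

Theorem theorem4p2 (R : realType) (T beta eta : R) (d : nat) (nu : 'I_d -> int)
  (F : (R -> R) -> R) (gradF : (R -> R) -> R -> R)
  (u : nat -> R -> R) (tau : nat -> R) (ubar : R -> R) (taubar : R) :
  0 < T -> 0 < beta -> 0 < eta ->
  (* nu_1 < ... < nu_d *)
  (forall i j : 'I_d, (i < j)%N -> nu i < nu j) ->
  (* F : L^1(0,T) -> R is well defined on a.e.-classes *)
  (forall v w, L1 T v -> L1 T w -> ae_eq_on T v w -> F v = F w) ->
  (* F is bounded from below *)
  (exists m : R, forall v, L1 T v -> m <= F v) ->
  (* F is Gateaux differentiable on L^2 with gradient gradF v in L^2 *)
  (forall v, L2 T v ->
     L2 T (gradF v) /\
     forall h, L2 T h ->
       (fun s : R => (F (fun x => v x + s * h x) - F v) / s) @ 0^'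
         --> inner2 T (gradF v) h) ->
  (* gradF is Lipschitz continuous from L^2 to L^2 *)
  (exists L : R, forall v w, L2 T v -> L2 T w ->
     nrm2 T (fun x => gradF v x - gradF w x) <= L * nrm2 T (fun x => v x - w x)) ->
  (* the proximal-gradient iteration *)
  Uad T nu (u 0%N) -> BV T (u 0%N) ->
  (forall k, 0 < tau k) ->
  (forall k, L2 T (u k.+1) /\
     forall v, L2 T v ->
       ((lin_quad T F gradF (u k) (tau k) (u k.+1))%:E + Gfun T beta nu (u k.+1)
        <= (lin_quad T F gradF (u k) (tau k) v)%:E + Gfun T beta nu v)%E) ->
  (forall k,
     ((eta * nrm2sq T (fun x => u k.+1 x - u k x))%:E
        + ((F (u k.+1))%:E + beta%:E * TV T (u k.+1))
      <= (F (u k))%:E + beta%:E * TV T (u k))%E) ->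
  (* ubar in U_ad is the weak-* limit of (u_k) in BV(0,T) *)
  Uad T nu ubar -> weak_star_BV T u ubar ->
  (* conclusion *)
  acc_point tau taubar ->
  forall v, Uad T nu v ->
    ((lin_quad T F gradF ubar taubar ubar)%:E + beta%:E * TV T ubar
     <= (lin_quad T F gradF ubar taubar v)%:E + beta%:E * TV T v)%E.
Proof.
move=> T0 beta0 _ _ _ _ grad_L2 [L grad_lip] Uu0 [_ TVu0_lty] _ prox _ Uubar
  [_ [_ [L1_cvg _]]] acc v Uv.
have Uu k : Uad T nu (u k).
  case: k => // k; apply: (Uad_of_prox_step T0 (ltW beta0) Uu0 TVu0_lty).
  exact: (prox k).2 _ (Uad_L2 Uu0).
have u_cvg := Uad_L2_cvg Uu Uubar L1_cvg.
have [sigma sigma_incr tau_cvg] := acc_point_subseq acc.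
have sigma1_incr : increasing_seq (fun n => (sigma n).+1).
  by move=> m n; rewrite /= !leEnat ltnS -leEnat sigma_incr.
have grad_cvg := L2_cvg_lipschitz (fun g hg => (grad_L2 g hg).1) grad_lip
  (L2_cvg_subseq sigma_incr u_cvg).
case TVv : (TV T v) => [V||]; last 2 first.
- by rewrite gt0_muley ?lte_fin // addey ?leey.
- by have := TV_ge0 v T0; rewrite TVv.
set c := (lin_quad T F gradF ubar taubar v - lin_quad T F gradF ubar taubar ubar) / beta + V.
suff TVubar_le : (TV T ubar <= c%:E)%E.
  apply: le_trans (leeD2l _ (lee_wpmul2l _ TVubar_le)) _; first by rewrite lee_fin ltW.
  by rewrite -!EFinM -!EFinD lee_fin /c mulrDr mulrC divfK ?gt_eqF //; lra.
apply: TV_le (Uad_L2 Uubar) _ => phi hphi phi_le1.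
rewrite -(ler_pM2l beta0) mulrDr (mulrC beta (_ / beta)) divfK ?gt_eqF //.
rewrite addrAC lerBrDl.
apply: lin_quad_test_ineq_cvg (L2_cvg_subseq sigma_incr u_cvg)
  (L2_cvg_subseq sigma1_incr u_cvg) grad_cvg tau_cvg (Uad_L2 Uv)
  (L2_continuous hphi.2.1) _ => n.
exact: prox_step_test_le (ltW beta0) (Uu _) Uv TVv hphi phi_le1 ((prox _).2 _ (Uad_L2 Uv)).
Qed.
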